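(* Let $R$ be a commutative ring, $\mathcal{A}=\{L_1,\dots,L_n\}$ an arrangement of affine lines in $\mathbb{C}^2$, and $\xi=a_1e_1+\dots+a_ne_n\in A^1_R(\mathcal{A})$. If $\sum_{i=1}^n a_i\in R^\times$, then the natural map $\operatorname{Ker}\big(A^1_R(\mathcal{A})_0\xrightarrow{\xi\wedge}A^2_R(\mathcal{A})\big)\to H^1(A^\bullet_R(\mathcal{A}),\xi)$ is an isomorphism; in particular $H^1(A^\bullet_R(\mathcal{A}),\xi)\cong\operatorname{Ker}\big(A^1_R(\mathcal{A})_0\xrightarrow{\xi\wedge}A^2_R(\mathcal{A})\big)$.
   Context: The Orlik–Solomon algebra $A^*_R(\mathcal{A})$ of an arrangement $\mathcal{A}=\{L_1,\dots,L_n\}$ of affine lines in $\mathbb{C}^2$ over a commutative ring $R$ is the graded $R$-algebra with $A^0_R=R$, $A^1_R=\bigoplus_{i=1}^n R e_i$, $A^2_R=\bigwedge^2 A^1_R/I$ where $I$ is the $R$-submodule generated by (i) $e_i\wedge e_j$ for each pair of parallel lines $L_i\parallel L_j$ and (ii) $e_i\wedge e_j-e_i\wedge e_k+e_j\wedge e_k$ for each triple of lines with $L_i\cap L_j\cap L_k\neq\emptyset$, and $A^q_R=0$ for $q\ge3$. For $\xi\in A^1_R(\mathcal{A})$ the Aomoto complex $(A^\bullet_R(\mathcal{A}),\xi)$ has differential $x\mapsto\xi\wedge x$ (so $1\mapsto \xi$ in degree $0$). $A^1_R(\mathcal{A})_0=\{c_1e_1+\dots+c_ne_n\mid c_1+\dots+c_n=0\}$.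 *)

From HB Require Import structures.
From mathcomp Require Import all_boot all_order all_algebra.
Set Implicit Arguments. Unset Strict Implicit. Unset Printing Implicit Defensive.
Import Order.TTheory GRing.Theory Num.Theory.
Local Open Scope ring_scope.

(** Affine lines in K^2 (K a field; the paper has K = C).  Line i is
    { (x,y) | a i * x + b i * y = c i } with (a i, b i) <> (0,0). *)
Definition on_line (K : fieldType) (n : nat) (a b c : 'I_n -> K)
  (i : 'I_n) (x y : K) : Prop := a i * x + b i * y = c i.

Definition line_arrangement (K : fieldType) (n : nat) (a b c : 'I_n -> K) : Prop :=
  (forall i, (a i, b i) != (0, 0)) /\
  (forall i j, i != j -> ~ (forall x y, on_line a b c i x y <-> on_line a b c j x y)).

Definition parallel (K : fieldType) (n : nat) (a b c : 'I_n -> K) (i j : 'I_n) : Prop :=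
  i != j /\ a i * b j = a j * b i.

Definition concurrent (K : fieldType) (n : nat) (a b c : 'I_n -> K) (i j k : 'I_n) : Prop :=
  [/\ i != j, i != k, j != k &
   exists x y, [/\ on_line a b c i x y, on_line a b c j x y & on_line a b c k x y]].

(** A^1_R = R^n as row vectors, basis e_i.  The exterior square of R^n is
    modelled (faithfully, as a free module) by alternating n x n matrices via
    v /\ w := v^T w - w^T v. *)
Definition e (R : comPzRingType) (n : nat) (i : 'I_n) : 'rV[R]_n := delta_mx 0 i.

Definition wedge (R : comPzRingType) (n : nat) (v w : 'rV[R]_n) : 'M[R]_n :=
  v^T *m w - w^T *m v.

(** Membership in the relation submodule I of /\^2 A^1_R (R-span of the
    generators (i) and (ii)). *)
Definition in_OS_ideal (K : fieldType) (R : comPzRingType) (n : nat)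
  (a b c : 'I_n -> K) (M : 'M[R]_n) : Prop :=
  exists (p : 'I_n -> 'I_n -> R) (q : 'I_n -> 'I_n -> 'I_n -> R),
    (forall i j, ~ parallel a b c i j -> p i j = 0) /\
    (forall i j k, ~ concurrent a b c i j k -> q i j k = 0) /\
    M = \sum_i \sum_j p i j *: wedge (e R i) (e R j)
        + \sum_i \sum_j \sum_k q i j k *:
            (wedge (e R i) (e R j) - wedge (e R i) (e R k) + wedge (e R j) (e R k)).

(** x is a 1-cocycle of the Aomoto complex: xi /\ x = 0 in A^2_R. *)
Definition cocycle1 (K : fieldType) (R : comPzRingType) (n : nat)
  (a b c : 'I_n -> K) (xi x : 'rV[R]_n) : Prop :=
  in_OS_ideal a b c (wedge xi x).

Definition coboundary1 (R : comPzRingType) (n : nat) (xi x : 'rV[R]_n) : Prop :=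
  exists r : R, x = r *: xi.

Definition in_A1_0 (R : comPzRingType) (n : nat) (x : 'rV[R]_n) : Prop :=
  \sum_i x 0 i = 0.

(** The natural map Ker(A^1_0 -> A^2) -> H^1(A, xi) = Ker(xi/\)/Im(xi),
    x |-> [x], is bijective (it is R-linear by construction):
    injective: a kernel element whose class vanishes is 0;
    surjective: every cocycle is cohomologous to a kernel element. *)
Definition natural_map_iso (K : fieldType) (R : comPzRingType) (n : nat)
  (a b c : 'I_n -> K) (xi : 'rV[R]_n) : Prop :=
  (forall x, in_A1_0 x -> cocycle1 a b c xi x -> coboundary1 xi x -> x = 0) /\
  (forall y, cocycle1 a b c xi y ->
     exists x, [/\ in_A1_0 x, cocycle1 a b c xi x & coboundary1 xi (y - x)]).

From HB Require Import structures.
From mathcomp Require Import all_boot all_order all_algebra.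
Set Implicit Arguments. Unset Strict Implicit. Unset Printing Implicit Defensive.
Import GRing.Theory.
Local Open Scope ring_scope.

(** Let [deg : A^1_R -> R] be the augmentation map
    [sum_i c_i e_i |-> sum_i c_i], so that A^1_R(A)_0 is its kernel, and let
    [u] be an inverse of [deg xi].
    - Injectivity: a coboundary [r xi] lying in A^1_0 satisfies
      [r * deg xi = 0], hence [r = 0] because [deg xi] is a unit.
    - Surjectivity: for a cocycle [y], the element [y - (u * deg y) xi]
      lies in A^1_0, is still a cocycle since [xi /\ xi = 0], and differs
      from [y] by a coboundary. *)

Definition deg (R : comPzRingType) (n : nat) (x : 'rV[R]_n) : R :=
  \sum_i x 0 i.

Lemma degZ (R : comPzRingType) (n : nat) (r : R) (x : 'rV[R]_n) :
  deg (r *: x) = r * deg x.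
Proof. by rewrite /deg mulr_sumr; apply: eq_bigr => i _; rewrite mxE. Qed.

Lemma degB (R : comPzRingType) (n : nat) (x y : 'rV[R]_n) :
  deg (x - y) = deg x - deg y.
Proof. by rewrite /deg -sumrB; apply: eq_bigr => i _; rewrite !mxE. Qed.

(** Since [v /\ v = 0], wedging with [v] ignores multiples of [v]. *)
Lemma wedge_subZ (R : comPzRingType) (n : nat) (v w : 'rV[R]_n) (t : R) :
  wedge v (w - t *: v) = wedge v w.
Proof.
have trmx_subZ : (w - t *: v)^T = w^T - t *: v^T by rewrite linearB linearZ.
rewrite /wedge trmx_subZ mulmxBl mulmxBr -scalemxAl -scalemxAr.
by rewrite opprB addrA subrK.
Qed.

Section UnitAugmentation.

Variables (K : fieldType) (R : comPzRingType) (n : nat).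
Variables (a b c : 'I_n -> K) (xi : 'rV[R]_n) (u : R).
Hypothesis u_deg_xi : u * deg xi = 1.

Definition proj0 (y : 'rV[R]_n) : 'rV[R]_n := y - (u * deg y) *: xi.

Lemma proj0_in_A1_0 (y : 'rV[R]_n) : in_A1_0 (proj0 y).
Proof.
rewrite /in_A1_0 -/(deg _) /proj0 degB degZ.
by rewrite -mulrA (mulrC (deg y)) mulrA u_deg_xi mul1r subrr.
Qed.

Lemma cocycle1_proj0 (y : 'rV[R]_n) :
  cocycle1 a b c xi y -> cocycle1 a b c xi (proj0 y).
Proof. by rewrite /cocycle1 /proj0 wedge_subZ. Qed.

Lemma coboundary1_sub_proj0 (y : 'rV[R]_n) : coboundary1 xi (y - proj0 y).
Proof. by exists (u * deg y); rewrite /proj0 opprB addrC subrK. Qed.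

Lemma coboundary1_A1_0_eq0 (x : 'rV[R]_n) :
  in_A1_0 x -> coboundary1 xi x -> x = 0.
Proof.
rewrite /in_A1_0 -/(deg _) => x0 [r x_def]; move: x0; rewrite x_def degZ => r_deg_xi.
by rewrite -[r]mulr1 -u_deg_xi mulrCA r_deg_xi mulr0 scale0r.
Qed.

End UnitAugmentation.

Theorem lemma2p1 (K : fieldType) (R : comPzRingType) (n : nat)
  (a b c : 'I_n -> K) (xi : 'rV[R]_n) :
  line_arrangement a b c ->
  (exists u : R, u * (\sum_i xi 0 i) = 1) ->
  natural_map_iso a b c xi.
Proof.
move=> _ [u u_deg_xi]; split=> [x x0 _|y y_cocycle].
  exact: (coboundary1_A1_0_eq0 u_deg_xi).
exists (proj0 xi u y); split.
- exact: proj0_in_A1_0.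
- exact: cocycle1_proj0.
- exact: coboundary1_sub_proj0.
Qed.
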